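(* For every instance of Bin Packing there exists an optimal solution in which, for every bin $b$ containing only small items and every bin $b'$ containing small items and additionally large items, the total size of the small items in $b$ is at least the total size of the small items in $b'$.
   Context: Bin Packing: given a sequence of items with sizes in $\mathbb{Q}_{\ge 0}$ and a capacity $T$, a solution assigns the items to bins so that the total size in each bin is at most $T$; an optimal solution uses the minimum number of bins. A subsequence of items is 3-incompatible if no three distinct items of it have total size at most $T$; the large items form a largest 3-incompatible subsequence and the remaining items are small. *)

From HB Require Import structures.
From mathcomp Require Import all_boot all_order all_algebra.
Set Implicit Arguments. Unset Strict Implicit. Unset Printing Implicit Defensive.
Import Order.TTheory GRing.Theory Num.Theory.
Local Open Scope ring_scope.

(* Items are indexed by 'I_n, with sizes s : 'I_n -> rat; capacity T.
   A solution with k bins is an assignment f : 'I_n -> 'I_k. *)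

Definition load (n k : nat) (s : 'I_n -> rat) (f : 'I_n -> 'I_k) (b : 'I_k) : rat :=
  \sum_(i | f i == b) s i.

(* total size of the items of bin b that do not belong to L (the small items) *)
Definition small_load (n k : nat) (s : 'I_n -> rat) (L : {set 'I_n})
    (f : 'I_n -> 'I_k) (b : 'I_k) : rat :=
  \sum_(i | (f i == b) && (i \notin L)) s i.

Definition feasible (n k : nat) (s : 'I_n -> rat) (T : rat) (f : 'I_n -> 'I_k) : Prop :=
  forall b : 'I_k, load s f b <= T.

Definition optimal (n k : nat) (s : 'I_n -> rat) (T : rat) (f : 'I_n -> 'I_k) : Prop :=
  feasible s T f /\
  forall (k' : nat) (g : 'I_n -> 'I_k'), feasible s T g -> (k <= k')%N.

Definition three_incompatible (n : nat) (s : 'I_n -> rat) (T : rat) (A : {set 'I_n}) : Prop :=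
  forall i j l : 'I_n, i \in A -> j \in A -> l \in A ->
    i != j -> i != l -> j != l -> T < s i + s j + s l.

Definition largest_three_incompatible (n : nat) (s : 'I_n -> rat) (T : rat)
    (A : {set 'I_n}) : Prop :=
  three_incompatible s T A /\
  forall B : {set 'I_n}, three_incompatible s T B -> (#|B| <= #|A|)%N.

Definition only_small (n k : nat) (L : {set 'I_n}) (f : 'I_n -> 'I_k) (b : 'I_k) : Prop :=
  forall i, f i = b -> i \notin L.

Definition small_and_large (n k : nat) (L : {set 'I_n}) (f : 'I_n -> 'I_k) (b : 'I_k) : Prop :=
  (exists i, f i = b /\ i \notin L) /\ (exists j, f j = b /\ j \in L).

(* Among the optimal solutions choose one maximising the total load of the
   bins holding only small items.  If such a bin b held less than the small
   part of a bin b' that also holds a large item, put the small items of b'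
   into b and the contents of b into b'.  Both bins still fit (b' loses more
   than it gains), b stays small-only with a larger load and b' keeps its
   large item, so the chosen potential strictly increases: a contradiction.
   The argument works for any set L of large items. *)
From HB Require Import structures.
From mathcomp Require Import all_boot all_order all_algebra.
Import Order.TTheory GRing.Theory Num.Theory.
Set Implicit Arguments. Unset Strict Implicit.
Local Open Scope ring_scope.

Section SmallBins.

Variables (n k : nat) (s : 'I_n -> rat) (L : {set 'I_n}).

Definition only_smallb (f : 'I_n -> 'I_k) (b : 'I_k) : bool :=
  [forall i, (f i == b) ==> (i \notin L)].

Lemma only_smallP f b : reflect (only_small L f b) (only_smallb f b).
Proof.
apply: (iffP forallP) => [h i /eqP fib | h i]; first exact: (implyP (h i)).
by apply/implyP => /eqP /h.
Qed.

Lemma only_small_neq f b b' j :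
  only_smallb f b -> f j = b' -> j \in L -> b != b'.
Proof.
move=> /forallP /(_ j) + fj jL; rewrite fj jL implybF.
by apply: contra => /eqP ->.
Qed.

Definition small_bins_load (f : 'I_n -> 'I_k) : rat :=
  \sum_b (if only_smallb f b then load s f b else 0).

Definition large_load (f : 'I_n -> 'I_k) (b : 'I_k) : rat :=
  \sum_(i | (f i == b) && (i \in L)) s i.

Lemma load_small_large (f : 'I_n -> 'I_k) b :
  load s f b = small_load s L f b + large_load f b.
Proof. by rewrite /load (bigID (mem L)) addrC. Qed.

Lemma load_finfun (f : 'I_n -> 'I_k) b : load s (finfun f) b = load s f b.
Proof. by apply: eq_bigl => i; rewrite ffunE. Qed.

Lemma feasibleP T (f : 'I_n -> 'I_k) :
  reflect (feasible s T f) [forall b, load s f b <= T].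
Proof. exact: (iffP forallP). Qed.

Lemma small_load_le_load (f : 'I_n -> 'I_k) b :
  (forall i, 0 <= s i) -> small_load s L f b <= load s f b.
Proof. by move=> hs0; rewrite load_small_large lerDl sumr_ge0. Qed.

Section Exchange.

Variables (f : 'I_n -> 'I_k) (b b' : 'I_k).
Hypothesis neq_bb' : b != b'.

Definition exchange : {ffun 'I_n -> 'I_k} :=
  [ffun i => if (f i == b') && (i \notin L) then b
             else if f i == b then b' else f i].

Lemma exchange_eq_to (i : 'I_n) :
  (exchange i == b) = (f i == b') && (i \notin L).
Proof.
rewrite ffunE; case: ifP => [_|_]; first by rewrite eqxx.
have [_ | fib] := eqVneq (f i) b; first by rewrite eq_sym (negbTE neq_bb').
exact: negbTE.
Qed.

Lemma exchange_eq_from (i : 'I_n) :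
  (exchange i == b') = (f i == b) || (f i == b') && (i \in L).
Proof.
rewrite ffunE; case: ifP => [/andP[/eqP -> nL]|].
  by rewrite (negbTE neq_bb') eq_sym (negbTE neq_bb') eqxx (negbTE nL).
have [-> _ | fib] := eqVneq (f i) b; first by rewrite eqxx.
by case: eqP => //= _ /negbT; rewrite negbK.
Qed.

Lemma exchange_eq_other c (i : 'I_n) :
  c != b -> c != b' -> (exchange i == c) = (f i == c).
Proof.
move=> cb cb'; rewrite ffunE; case: ifP => [/andP[/eqP -> _]|_].
  by rewrite eq_sym (negbTE cb) eq_sym (negbTE cb').
by case: ifP => [/eqP ->|//]; rewrite eq_sym (negbTE cb') eq_sym (negbTE cb).
Qed.

Lemma load_exchange_to : load s exchange b = small_load s L f b'.
Proof. by apply: eq_bigl => i; rewrite exchange_eq_to. Qed.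

Lemma load_exchange_from : load s exchange b' = load s f b + large_load f b'.
Proof.
rewrite /load (bigID (fun i => f i == b)) /=; congr (_ + _).
  apply: eq_bigl => i; rewrite exchange_eq_from.
  by case: (f i == b); rewrite ?andbF.
apply: eq_bigl => i; rewrite exchange_eq_from.
by have [->|] := eqVneq (f i) b; rewrite /= ?(negbTE neq_bb') ?andbT.
Qed.

Lemma load_exchange_other c :
  c != b -> c != b' -> load s exchange c = load s f c.
Proof. by move=> cb cb'; apply: eq_bigl => i; rewrite exchange_eq_other. Qed.

Lemma only_smallb_exchange_other c :
  c != b -> c != b' -> only_smallb exchange c = only_smallb f c.
Proof. by move=> cb cb'; apply: eq_forallb => i; rewrite exchange_eq_other. Qed.

Lemma only_smallb_exchange_to : only_smallb exchange b.
Proof.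
by apply/forallP => i; rewrite exchange_eq_to; apply/implyP => /andP[].
Qed.

Lemma exchange_large j : f j = b' -> j \in L -> exchange j = b'.
Proof.
by move=> fj jL; apply/eqP; rewrite exchange_eq_from fj jL eqxx orbT.
Qed.

End Exchange.

Section Improvement.

Variables (T : rat) (f : 'I_n -> 'I_k) (b b' : 'I_k) (j : 'I_n).
Hypotheses (hs0 : forall i, 0 <= s i) (hf : feasible s T f).
Hypotheses (small_b : only_smallb f b) (fj : f j = b') (jL : j \in L).
Hypothesis lt_load : load s f b < small_load s L f b'.

Let neq_bb' : b != b' := only_small_neq small_b fj jL.

Lemma feasible_exchange : feasible s T (exchange f b b').
Proof.
move=> c; have [-> | cb] := eqVneq c b.
  rewrite load_exchange_to //.
  exact: le_trans (small_load_le_load _ _ hs0) (hf b').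
have [-> | cb'] := eqVneq c b'; last by rewrite load_exchange_other ?hf.
rewrite load_exchange_from //; apply: le_trans (hf b').
by rewrite [load s f b']load_small_large lerD2r ltW.
Qed.

Lemma small_bins_load_exchange :
  small_bins_load f < small_bins_load (exchange f b b').
Proof.
rewrite /small_bins_load (bigD1 b) //= [X in _ < X](bigD1 b) //=.
rewrite small_b only_smallb_exchange_to // load_exchange_to //.
apply: ltr_leD => //; apply: ler_sum => c cb.
have [-> | cb'] := eqVneq c b'; last first.
  by rewrite only_smallb_exchange_other ?load_exchange_other.
have not_small g : g j = b' -> only_smallb g b' = false.
  by move=> gj; apply/negbTE/negP => /forallP /(_ j); rewrite gj eqxx jL.
by rewrite not_small // not_small // exchange_large.
Qed.

End Improvement.

End SmallBins.

Theorem claim10 (n : nat) (s : 'I_n -> rat) (T : rat)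
    (hs0 : forall i, 0 <= s i) (hsT : forall i, s i <= T)
    (L : {set 'I_n}) (hL : largest_three_incompatible s T L) :
  exists (k : nat) (f : 'I_n -> 'I_k),
    optimal s T f /\
    forall b b' : 'I_k, only_small L f b -> small_and_large L f b' ->
      small_load s L f b' <= load s f b.
Proof.
pose feasibleb k (g : {ffun 'I_n -> 'I_k}) := [forall b, load s g b <= T].
have [|k] := ex_minnP (_ : exists k, [exists g, feasibleb k g]).
  exists n; apply/existsP; exists [ffun i => i]; apply/feasibleP => b.
  by rewrite load_finfun /load big_pred1_eq hsT.
move=> /existsP[g0 feas_g0] min_k.
have [g /feasibleP feas_g max_g] :=
  arg_maxP (fun g : {ffun 'I_n -> 'I_k} => small_bins_load s L g) feas_g0.
exists k, g; split.
  split=> // k' g' feas_g'; apply: min_k; apply/existsP.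
  exists (finfun g'); apply/feasibleP => b.
  by rewrite load_finfun feas_g'.
move=> b b' /only_smallP small_b [_ [j [gj jL]]].
rewrite leNgt; apply/negP => lt_load.
have /feasibleP feas_ex := feasible_exchange hs0 feas_g small_b gj jL lt_load.
have := lt_le_trans (small_bins_load_exchange small_b gj jL lt_load)
                    (max_g _ feas_ex).
by rewrite ltxx.
Qed.
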